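(* Let $G=(\pi,R)$ be a monogamy-of-entanglement game whose question set $X$ satisfies $|X|=2$. Then $\omega(G)=\omega^\ast(G)$.
   Context: A monogamy-of-entanglement game $G=(\pi,R)$ consists of a finite nonempty question set $X$, a probability distribution $\pi$ on $X$, a finite nonempty answer set $A$, a positive integer $m$, and positive semidefinite $m\times m$ matrices $R(a|x)$ ($a\in A$, $x\in X$) with $\sum_{a\in A}R(a|x)=\mathbb{1}$ for each $x$. The quantum value $\omega^\ast(G)$ is the supremum, over all finite-dimensional complex Hilbert spaces $\mathcal{A},\mathcal{B}$, all density operators $\rho$ on $\mathbb{C}^m\otimes\mathcal{A}\otimes\mathcal{B}$, and all families of POVMs $\{A^x_a:a\in A\}$ on $\mathcal{A}$ and $\{B^x_a:a\in A\}$ on $\mathcal{B}$ (one for each $x\in X$), of $\sum_{x\in X}\pi(x)\sum_{a\in A}\mathrm{Tr}\big((R(a|x)\otimes A^x_a\otimes B^x_a)\rho\big)$. The unentangled value $\omega(G)$ is the same supremum restricted to fully separable states $\rho=\sum_j p_j\rho^R_j\otimes\rho^A_j\otimes\rho^B_j$; it equals $\max_{f:X\to A}\big\|\sum_{x\in X}\pi(x)R(f(x)|x)\big\|$, where $\|\cdot\|$ is the operator (spectral) norm. *)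

(* Complex numbers are modelled by an arbitrary
   numeric closed field C (e.g. algC). *)
From HB Require Import structures.
From mathcomp Require Import all_boot all_order all_algebra.
Set Implicit Arguments. Unset Strict Implicit. Unset Printing Implicit Defensive.
Import Order.TTheory GRing.Theory Num.Theory.
Local Open Scope ring_scope.

Definition adjmx {C : numClosedFieldType} m n (M : 'M[C]_(m, n)) : 'M[C]_(n, m) :=
  (map_mx Num.conj M)^T.

Definition psd {C : numClosedFieldType} n (M : 'M[C]_n) : Prop :=
  adjmx M = M /\ forall v : 'rV[C]_n, 0 <= (v *m M *m adjmx v) 0 0.

(* Decomposition of an index of C^(m*n) = C^m (x) C^n. *)
Definition tsplit m n (k : 'I_(m * n)) : 'I_m * 'I_n :=
  enum_val (cast_ord (esym (mxvec_cast m n)) k).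

Definition tensmx {R : pzRingType} m1 n1 m2 n2
  (A : 'M[R]_(m1, n1)) (B : 'M[R]_(m2, n2)) : 'M[R]_(m1 * m2, n1 * n2) :=
  \matrix_(i, j) (A (tsplit i).1 (tsplit j).1 * B (tsplit i).2 (tsplit j).2).

Definition density {C : numClosedFieldType} n (rho : 'M[C]_n) : Prop :=
  psd rho /\ \tr rho = 1.

Definition povm {C : numClosedFieldType} (A : finType) d (P : A -> 'M[C]_d) : Prop :=
  (forall a, psd (P a)) /\ \sum_(a : A) P a = 1%:M.

Definition moe_game {C : numClosedFieldType} (X A : finType) (m : nat)
  (pi : X -> C) (R : A -> X -> 'M[C]_m) : Prop :=
  [/\ (0 < #|X|)%N, (0 < #|A|)%N, (0 < m)%N,
      (forall x, 0 <= pi x) /\ \sum_(x : X) pi x = 1 &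
      forall x, povm (fun a => R a x)].

Definition game_value {C : numClosedFieldType} (X A : finType) (m dA dB : nat)
  (pi : X -> C) (R : A -> X -> 'M[C]_m)
  (rho : 'M[C]_(m * dA * dB)) (Aop : X -> A -> 'M[C]_dA) (Bop : X -> A -> 'M[C]_dB) : C :=
  \sum_(x : X) pi x * \sum_(a : A) \tr (tensmx (tensmx (R a x) (Aop x a)) (Bop x a) *m rho).

Definition quantum_values {C : numClosedFieldType} (X A : finType) (m : nat)
  (pi : X -> C) (R : A -> X -> 'M[C]_m) (v : C) : Prop :=
  exists (dA dB : nat) (rho : 'M[C]_(m * dA * dB))
         (Aop : X -> A -> 'M[C]_dA) (Bop : X -> A -> 'M[C]_dB),
    [/\ density rho, (forall x, povm (Aop x)), (forall x, povm (Bop x)) &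
        v = game_value pi R rho Aop Bop].

Definition fully_separable {C : numClosedFieldType} (m dA dB : nat)
  (rho : 'M[C]_(m * dA * dB)) : Prop :=
  exists (k : nat) (p : 'I_k -> C) (rR : 'I_k -> 'M[C]_m)
         (rA : 'I_k -> 'M[C]_dA) (rB : 'I_k -> 'M[C]_dB),
    [/\ (forall j, 0 <= p j), \sum_(j < k) p j = 1,
        (forall j, [/\ density (rR j), density (rA j) & density (rB j)]) &
        rho = \sum_(j < k) p j *: tensmx (tensmx (rR j) (rA j)) (rB j)].

Definition unentangled_values {C : numClosedFieldType} (X A : finType) (m : nat)
  (pi : X -> C) (R : A -> X -> 'M[C]_m) (v : C) : Prop :=
  exists (dA dB : nat) (rho : 'M[C]_(m * dA * dB))
         (Aop : X -> A -> 'M[C]_dA) (Bop : X -> A -> 'M[C]_dB),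
    [/\ density rho, fully_separable rho,
        (forall x, povm (Aop x)), (forall x, povm (Bop x)) &
        v = game_value pi R rho Aop Bop].

Definition is_sup {C : numClosedFieldType} (S : C -> Prop) (w : C) : Prop :=
  (forall v, S v -> v <= w) /\ (forall u, (forall v, S v -> v <= u) -> w <= u).

Definition is_unentangled_value {C : numClosedFieldType} (X A : finType) (m : nat)
  (pi : X -> C) (R : A -> X -> 'M[C]_m) (w : C) : Prop :=
  is_sup (unentangled_values pi R) w.

Definition is_quantum_value {C : numClosedFieldType} (X A : finType) (m : nat)
  (pi : X -> C) (R : A -> X -> 'M[C]_m) (w : C) : Prop :=
  is_sup (quantum_values pi R) w.

From HB Require Import structures.
From mathcomp Require Import all_boot all_order all_algebra.
Import Order.TTheory GRing.Theory Num.Theory Num.Def.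
Set Implicit Arguments. Unset Strict Implicit. Unset Printing Implicit Defensive.
Local Open Scope ring_scope.

(* Label the two questions x1, x2 and let M(a, b) = pi(x1) R(a|x1) + pi(x2) R(b|x2).
   For any quantum strategy the game operator
   sum_x pi(x) sum_a R(a|x) (x) A^x_a (x) B^x_a is dominated, in the PSD order, by
   sum_(a,b) M(a, b) (x) A^x1_a (x) B^x2_b: the difference is a sum of terms
   R (x) A (x) (1 - B) and R (x) (1 - A) (x) B.  Hence every quantum value is at most
   the largest eigenvalue w of the operators M(a, b).  Conversely, measuring an
   eigenvector of the maximizing M(a, b) and answering a at x1 and b at x2, with
   trivial one-dimensional systems for the other two players, is an unentangled
   strategy of value exactly w. *)

Section Adjoint.
Variable C : numClosedFieldType.

Lemma adjmxE m n (M : 'M[C]_(m, n)) i j : adjmx M i j = (M j i)^*.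
Proof. by rewrite !mxE. Qed.

Lemma adjmxK m n (M : 'M[C]_(m, n)) : adjmx (adjmx M) = M.
Proof. by apply/matrixP => i j; rewrite !adjmxE conjCK. Qed.

Lemma adjmxM m n p (A : 'M[C]_(m, n)) (B : 'M[C]_(n, p)) :
  adjmx (A *m B) = adjmx B *m adjmx A.
Proof.
apply/matrixP => i j; rewrite adjmxE !mxE rmorph_sum; apply: eq_bigr => k _.
by rewrite !adjmxE rmorphM mulrC.
Qed.

Lemma adjmxD m n (A B : 'M[C]_(m, n)) : adjmx (A + B) = adjmx A + adjmx B.
Proof. by apply/matrixP => i j; rewrite !(adjmxE, mxE) rmorphD. Qed.

Lemma adjmxZ m n c (A : 'M[C]_(m, n)) : adjmx (c *: A) = c^* *: adjmx A.
Proof. by apply/matrixP => i j; rewrite !(adjmxE, mxE) rmorphM. Qed.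

Lemma mxtrace_sum n (I : finType) (F : I -> 'M[C]_n) :
  \tr (\sum_i F i) = \sum_i \tr (F i).
Proof. by rewrite /mxtrace exchange_big; apply: eq_bigr => k _; rewrite summxE. Qed.

Lemma mulmx_adj_diagE m n (A : 'M[C]_(m, n)) (N : 'M[C]_n) i :
  (A *m N *m adjmx A) i i = (row i A *m N *m adjmx (row i A)) 0 0.
Proof.
rewrite !mxE; apply: eq_bigr => l _; rewrite !mxE; congr (_ * _).
by apply: eq_bigr => r _; rewrite !mxE.
Qed.

Lemma hermitian_spectral n (M : 'M[C]_n) : adjmx M = M ->
    [/\ spectralmx M *m adjmx (spectralmx M) = 1%:M,
        adjmx (spectralmx M) *m spectralmx M = 1%:M,
        M = adjmx (spectralmx M) *m diag_mx (spectral_diag M) *m spectralmx M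
      & forall i, spectral_diag M 0 i \is Num.real].
Proof.
move=> hM.
have herM : M \is hermsymmx.
  by apply/is_hermitianmxP; rewrite expr0 scale1r -map_trmx -[LHS]hM.
have unitU := spectral_unitarymx M.
have adjU : adjmx (spectralmx M) = (spectralmx M ^t conjC)%sesqui.
  by rewrite /adjmx map_trmx.
have UUadj : spectralmx M *m adjmx (spectralmx M) = 1%:M.
  by rewrite adjU; apply/eqP; exact: unitU.
split => //.
- by rewrite adjU -invmx_unitary // mulVmx //; exact: unitarymx_unit.
- have /= E := orthomx_spectralP (hermitian_normalmx herM).
  by rewrite {1}E invmx_unitary // adjU.
- by move=> i; have /mxOverP := hermitian_spectral_diag_real herM; exact.
Qed.

Lemma spectral_row_quad n (M : 'M[C]_n) i : adjmx M = M ->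
  (row i (spectralmx M) *m adjmx (row i (spectralmx M))) 0 0 = 1 /\
  (row i (spectralmx M) *m M *m adjmx (row i (spectralmx M))) 0 0
    = spectral_diag M 0 i.
Proof.
move=> /hermitian_spectral; set U := spectralmx M; move=> [UUadj _ EM _]; split.
  by have := mulmx_adj_diagE U 1%:M i; rewrite !mulmx1 UUadj mxE eqxx.
rewrite -mulmx_adj_diagE {1}EM !mulmxA UUadj mul1mx -mulmxA UUadj mulmx1.
by rewrite mxE eqxx mulr1n.
Qed.

End Adjoint.

Section PositiveSemidefinite.
Variable C : numClosedFieldType.

Lemma psd_diag n (N : 'M[C]_n) :
  (forall k l, k != l -> N k l = 0) -> (forall k, 0 <= N k k) -> psd N.
Proof.
move=> N_offdiag N_diag; split.
  apply/matrixP => i j; rewrite adjmxE; have [->|ij] := eqVneq i j.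
    by rewrite conj_Creal // ger0_real.
  by rewrite !N_offdiag ?rmorph0 // eq_sym.
move=> v; rewrite !mxE; apply: sumr_ge0 => l _; rewrite adjmxE !mxE.
rewrite (bigD1 l) //= big1 ?addr0 => [|r rl]; last by rewrite N_offdiag ?mulr0.
by rewrite mulrAC mulr_ge0 // mul_conjC_ge0.
Qed.

Lemma psd_conj k n (U : 'M[C]_(k, n)) (N : 'M[C]_k) :
  psd N -> psd (adjmx U *m N *m U).
Proof.
move=> [hermN quadN]; split; first by rewrite !adjmxM adjmxK hermN mulmxA.
move=> v; have := quadN (v *m adjmx U).
by rewrite adjmxM adjmxK !mulmxA.
Qed.

Lemma psdD n (A B : 'M[C]_n) : psd A -> psd B -> psd (A + B).
Proof.
move=> [hermA quadA] [hermB quadB]; split; first by rewrite adjmxD hermA hermB.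
by move=> v; rewrite mulmxDr mulmxDl mxE addr_ge0.
Qed.

Lemma psd_scalar n (c : C) : 0 <= c -> psd (c%:M : 'M_n).
Proof.
by move=> c_ge0; apply: psd_diag => [k l kl|k]; rewrite mxE ?eqxx // (negbTE kl).
Qed.

Lemma psd_sum n (I : finType) (P : pred I) (F : I -> 'M[C]_n) :
  (forall i, psd (F i)) -> psd (\sum_(i | P i) F i).
Proof.
move=> psdF; apply: (big_ind (@psd C n)) => //; last exact: psdD.
by apply: psd_diag => *; rewrite mxE.
Qed.

Lemma psdZ n c (A : 'M[C]_n) : 0 <= c -> psd A -> psd (c *: A).
Proof.
move=> c_ge0 [hermA quadA]; split.
  by rewrite adjmxZ hermA conj_Creal // ger0_real.
by move=> v; rewrite -scalemxAr -scalemxAl mxE mulr_ge0.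
Qed.

Lemma psd_spectral n (M : 'M[C]_n) : psd M ->
  exists (U : 'M[C]_n) (d : 'rV[C]_n),
    M = adjmx U *m diag_mx d *m U /\ forall i, 0 <= d 0 i.
Proof.
move=> [hermM quadM]; have [_ _ EM _] := hermitian_spectral hermM.
exists (spectralmx M), (spectral_diag M); split => // i.
by have [_ <-] := spectral_row_quad i hermM; exact: quadM.
Qed.

Lemma psd_scalar_sub n (M : 'M[C]_n) (w : C) : adjmx M = M ->
  (forall i, spectral_diag M 0 i <= w) -> psd (w%:M - M).
Proof.
move=> /hermitian_spectral [_ UadjU EM _] le_w.
have -> : w%:M - M = adjmx (spectralmx M) *m (w%:M - diag_mx (spectral_diag M))
                       *m spectralmx M.
  by rewrite mulmxBr mulmxBl -EM mul_mx_scalar -scalemxAl UadjU scalemx1.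
apply: psd_conj; apply: psd_diag => [k l kl|k]; rewrite !mxE ?eqxx.
  by rewrite (negbTE kl) !mulr0n subrr.
by rewrite !mulr1n subr_ge0.
Qed.

Lemma psd_povm_compl (A : finType) d (P : A -> 'M[C]_d) a :
  povm P -> psd (1%:M - P a).
Proof.
by move=> [psdP <-]; rewrite (bigD1 a) //= addrC addrK; apply: psd_sum.
Qed.

(* [\tr (P rho) = sum_k d_k <u_k, P u_k>] for a spectral decomposition of rho. *)
Lemma mxtrace_psd_ge0 n (P rho : 'M[C]_n) : psd P -> psd rho -> 0 <= \tr (P *m rho).
Proof.
move=> psdP /psd_spectral [U [d [-> d_ge0]]].
rewrite !mulmxA mxtrace_mulC !mulmxA mul_mx_diag /mxtrace.
apply: sumr_ge0 => k _; rewrite mxE mulr_ge0 //.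
by rewrite mulmx_adj_diagE; exact: psdP.2.
Qed.

End PositiveSemidefinite.

Section Tensor.
Variable C : numClosedFieldType.

Lemma tsplit_bij m n : bijective (@tsplit m n).
Proof.
exists (fun p => cast_ord (mxvec_cast m n) (enum_rank p)) => k.
  by rewrite /tsplit enum_valK cast_ordKV.
by rewrite /tsplit cast_ordK enum_rankK.
Qed.

Lemma tsplit_eq m n (k l : 'I_(m * n)) : (tsplit k == tsplit l) = (k == l).
Proof. exact/inj_eq/bij_inj/tsplit_bij. Qed.

Lemma sum_tsplit m n (F : 'I_m -> 'I_n -> C) :
  \sum_(k < m * n) F (tsplit k).1 (tsplit k).2 = \sum_i \sum_j F i j.
Proof. by rewrite pair_big /= (reindex (@tsplit m n)) //; exact/onW_bij/tsplit_bij. Qed.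

Lemma tensmx_mul m1 n1 p1 m2 n2 p2 (A : 'M[C]_(m1, n1)) (B : 'M[C]_(m2, n2))
  (A' : 'M[C]_(n1, p1)) (B' : 'M[C]_(n2, p2)) :
  tensmx A B *m tensmx A' B' = tensmx (A *m A') (B *m B').
Proof.
apply/matrixP => i j; rewrite [in RHS]mxE !mxE big_distrlr /=.
rewrite -(sum_tsplit (fun r s => A (tsplit i).1 r * A' r (tsplit j).1 *
   (B (tsplit i).2 s * B' s (tsplit j).2))).
by apply: eq_bigr => k _; rewrite !mxE mulrACA.
Qed.

Lemma mxtrace_tensmx m n (A : 'M[C]_m) (B : 'M[C]_n) :
  \tr (tensmx A B) = \tr A * \tr B.
Proof.
rewrite /mxtrace big_distrlr /= -(sum_tsplit (fun r s => A r r * B s s)).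
by apply: eq_bigr => k _; rewrite !mxE.
Qed.

Lemma adjmx_tens m1 n1 m2 n2 (A : 'M[C]_(m1, n1)) (B : 'M[C]_(m2, n2)) :
  adjmx (tensmx A B) = tensmx (adjmx A) (adjmx B).
Proof. by apply/matrixP => i j; rewrite !mxE rmorphM. Qed.

Lemma tensmx_scalar m n (a b : C) :
  tensmx (a%:M : 'M_m) (b%:M : 'M_n) = (a * b)%:M.
Proof.
apply/matrixP => i j; rewrite !mxE -tsplit_eq.
case: (tsplit i) (tsplit j) => [i1 i2] [j1 j2] /=; rewrite xpair_eqE.
by case: (i1 == j1); case: (i2 == j2); rewrite ?mulr1n ?mulr0n ?mulr0 ?mul0r.
Qed.

Lemma tensmx_suml m1 n1 m2 n2 (I : finType) (F : I -> 'M[C]_(m1, n1))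
  (B : 'M[C]_(m2, n2)) :
  tensmx (\sum_i F i) B = \sum_i tensmx (F i) B.
Proof.
apply/matrixP => i j; rewrite summxE !mxE summxE mulr_suml.
by apply: eq_bigr => k _; rewrite mxE.
Qed.

Lemma tensmx_sumr m1 n1 m2 n2 (I : finType) (A : 'M[C]_(m1, n1))
  (F : I -> 'M[C]_(m2, n2)) :
  tensmx A (\sum_i F i) = \sum_i tensmx A (F i).
Proof.
apply/matrixP => i j; rewrite summxE !mxE summxE mulr_sumr.
by apply: eq_bigr => k _; rewrite mxE.
Qed.

Lemma tensmxZl m1 n1 m2 n2 c (A : 'M[C]_(m1, n1)) (B : 'M[C]_(m2, n2)) :
  tensmx (c *: A) B = c *: tensmx A B.
Proof. by apply/matrixP => i j; rewrite !mxE mulrA. Qed.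

Lemma tensmxDl m1 n1 m2 n2 (A A' : 'M[C]_(m1, n1)) (B : 'M[C]_(m2, n2)) :
  tensmx (A + A') B = tensmx A B + tensmx A' B.
Proof. by apply/matrixP => i j; rewrite !mxE mulrDl. Qed.

Lemma tensmxBl m1 n1 m2 n2 (A A' : 'M[C]_(m1, n1)) (B : 'M[C]_(m2, n2)) :
  tensmx (A - A') B = tensmx A B - tensmx A' B.
Proof. by apply/matrixP => i j; rewrite !mxE mulrBl. Qed.

Lemma tensmxBr m1 n1 m2 n2 (A : 'M[C]_(m1, n1)) (B B' : 'M[C]_(m2, n2)) :
  tensmx A (B - B') = tensmx A B - tensmx A B'.
Proof. by apply/matrixP => i j; rewrite !mxE mulrBr. Qed.

Lemma psd_tens m n (A : 'M[C]_m) (B : 'M[C]_n) :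
  psd A -> psd B -> psd (tensmx A B).
Proof.
move=> /psd_spectral [U [d [-> d_ge0]]] /psd_spectral [V [e [-> e_ge0]]].
rewrite -!tensmx_mul -adjmx_tens; apply: psd_conj.
apply: psd_diag => [k l kl|k]; rewrite !mxE; last by rewrite !eqxx !mulr1n mulr_ge0.
move: kl; rewrite -tsplit_eq; case: (tsplit k) (tsplit l) => [k1 k2] [l1 l2] /=.
by rewrite xpair_eqE negb_and => /orP [] /negbTE ->; rewrite ?mulr0n ?mul0r ?mulr0.
Qed.

End Tensor.

Lemma sum_card2 (X : finType) (x1 x2 : X) (V : nmodType) (F : X -> V) :
  x1 != x2 -> #|X| = 2%N -> \sum_x F x = F x1 + F x2.
Proof.
move=> x12 cardX; rewrite (bigD1 x1) //= (bigD1 x2) 1?eq_sym //= big1 ?addr0 //.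
move=> y /andP [yx1 yx2]; have : uniq [:: x1; x2; y].
  by rewrite /= !inE negb_or x12 (eq_sym x1) (eq_sym x2) yx1 yx2.
by move=> /(uniq_leq_size)/(_ (fun z _ => mem_enum X z)); rewrite -cardE cardX.
Qed.

Lemma real_argmax (C : numDomainType) (T : finType) (g : T -> C) (t0 : T) :
  (forall t, g t \is Num.real) -> exists t1, forall t, g t <= g t1.
Proof.
move=> g_real; suff [t1 max_t1] : exists t1, forall t, t \in enum T -> g t <= g t1.
  by exists t1 => t; apply: max_t1; rewrite mem_enum.
elim: (enum T) => [|x s [t1 IH]]; first by exists t0.
have /orP [le_x|le_t1] := real_leVge (g_real x) (g_real t1).
  by exists t1 => t; rewrite inE => /orP [/eqP ->|/IH].
by exists x => t; rewrite inE => /orP [/eqP ->|/IH le_t]; last exact: le_trans le_t le_t1.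
Qed.

Lemma is_sup_max (C : numClosedFieldType) (S : C -> Prop) (w : C) :
  S w -> (forall v, S v -> v <= w) -> is_sup S w.
Proof. by move=> Sw le_w; split => // u; apply. Qed.

Section Game.
Variables (C : numClosedFieldType) (X A : finType) (m : nat).
Variables (pi : X -> C) (R : A -> X -> 'M[C]_m).

Lemma unentangled_quantum_values v :
  unentangled_values pi R v -> quantum_values pi R v.
Proof.
move=> [dA [dB [rho [Aop [Bop [rho_dens _ Apovm Bpovm ->]]]]]].
by exists dA, dB, rho, Aop, Bop.
Qed.

Lemma deterministic_unentangled_value (f : X -> A) (v : 'rV[C]_m) :
  (v *m adjmx v) 0 0 = 1 ->
  unentangled_values pi R (\sum_x pi x * (v *m R (f x) x *m adjmx v) 0 0).
Proof.
move=> v_unit; pose rhoR := adjmx v *m v.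
pose Aop x a : 'M[C]_1 := ((f x == a)%:R)%:M.
have rhoR_dens : density rhoR.
  split; last by rewrite mxtrace_mulC trace_mx11.
  have -> : rhoR = adjmx v *m 1%:M *m v by rewrite mulmx1.
  by apply: psd_conj; apply/psd_scalar/ler01.
have one_dens : density (1%:M : 'M[C]_1).
  by split; [apply: psd_scalar | rewrite mxtrace1].
have Apovm x : povm (Aop x).
  split=> [a|]; first exact/psd_scalar/ler0n.
  rewrite -raddf_sum (bigD1 (f x)) //= eqxx big1 ?addr0 // => a fxa.
  by rewrite eq_sym (negbTE fxa).
exists 1%N, 1%N, (tensmx (tensmx rhoR 1%:M) 1%:M), Aop, Aop; split => //.
- split; first exact: psd_tens (psd_tens rhoR_dens.1 one_dens.1) one_dens.1.
  by rewrite !mxtrace_tensmx rhoR_dens.2 mxtrace1 !mulr1.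
- exists 1%N, (fun=> 1), (fun=> rhoR), (fun=> 1%:M), (fun=> 1%:M).
  by split => //; rewrite big_ord1 // scale1r.
rewrite /game_value; apply: eq_bigr => x _; congr (_ * _).
rewrite (bigD1 (f x)) //= big1 ?addr0 => [|a fxa].
  rewrite !tensmx_mul !mulmx1 !mxtrace_tensmx /Aop !mxtrace_scalar eqxx !mulr1.
  by rewrite /rhoR mulmxA mxtrace_mulC mulmxA trace_mx11.
rewrite !tensmx_mul !mulmx1 !mxtrace_tensmx /Aop !mxtrace_scalar.
by rewrite eq_sym (negbTE fxa) !mulr0.
Qed.

Hypotheses (pi_ge0 : forall x, 0 <= pi x) (R_povm : forall x, povm (fun a => R a x)).
Variables (x1 x2 : X).
Hypotheses (x12 : x1 != x2) (cardX : #|X| = 2%N).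

Definition pair_op (a b : A) : 'M[C]_m := pi x1 *: R a x1 + pi x2 *: R b x2.

Lemma pair_op_herm a b : adjmx (pair_op a b) = pair_op a b.
Proof.
have conj_pi x : (pi x)^* = pi x by rewrite conj_Creal // ger0_real.
by rewrite adjmxD !adjmxZ !conj_pi ((R_povm x1).1 a).1 ((R_povm x2).1 b).1.
Qed.

Section Strategy.
Variables (dA dB : nat) (Aop : X -> A -> 'M[C]_dA) (Bop : X -> A -> 'M[C]_dB).
Hypotheses (Apovm : forall x, povm (Aop x)) (Bpovm : forall x, povm (Bop x)).

Let game_op := \sum_x pi x *: \sum_a tensmx (tensmx (R a x) (Aop x a)) (Bop x a).
Let pair_sum := \sum_a \sum_b tensmx (tensmx (pair_op a b) (Aop x1 a)) (Bop x2 b).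

Lemma game_valueE (rho : 'M[C]_(m * dA * dB)) :
  game_value pi R rho Aop Bop = \tr (game_op *m rho).
Proof.
rewrite /game_value mulmx_suml mxtrace_sum; apply: eq_bigr => x _.
by rewrite -scalemxAl mxtraceZ mulmx_suml mxtrace_sum.
Qed.

Lemma pair_sumE :
  pi x1 *: \sum_a tensmx (tensmx (R a x1) (Aop x1 a)) 1%:M
  + pi x2 *: \sum_b tensmx (tensmx (R b x2) 1%:M) (Bop x2 b) = pair_sum.
Proof.
rewrite -(Bpovm x2).2 -(Apovm x1).2.
have -> : \sum_a tensmx (tensmx (R a x1) (Aop x1 a)) (\sum_b Bop x2 b)
        = \sum_a \sum_b tensmx (tensmx (R a x1) (Aop x1 a)) (Bop x2 b).
  by apply: eq_bigr => a _; rewrite tensmx_sumr.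
have -> : \sum_b tensmx (tensmx (R b x2) (\sum_a Aop x1 a)) (Bop x2 b)
        = \sum_a \sum_b tensmx (tensmx (R b x2) (Aop x1 a)) (Bop x2 b).
  by rewrite exchange_big; apply: eq_bigr => b _; rewrite tensmx_sumr tensmx_suml.
rewrite !scaler_sumr -big_split; apply: eq_bigr => a _ /=.
rewrite !scaler_sumr -big_split; apply: eq_bigr => b _ /=.
by rewrite /pair_op !tensmxDl !tensmxZl.
Qed.

Lemma psd_pair_sum_sub_game_op : psd (pair_sum - game_op).
Proof.
rewrite -pair_sumE /game_op (sum_card2 _ x12 cardX).
rewrite opprD addrACA -!scalerBr -!sumrB.
apply: psdD; apply: psdZ => //; apply: psd_sum => a.
  rewrite -tensmxBr; apply: psd_tens; last exact: psd_povm_compl.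
  by apply: psd_tens; [exact: (R_povm x1).1 | exact: (Apovm x1).1].
rewrite -tensmxBl -tensmxBr; apply: psd_tens; last exact: (Bpovm x2).1.
by apply: psd_tens; [exact: (R_povm x2).1 | exact: psd_povm_compl].
Qed.

Lemma psd_scalar_sub_pair_sum w :
  (forall a b, psd (w%:M - pair_op a b)) -> psd (w%:M - pair_sum).
Proof.
move=> le_w; have -> : (w%:M : 'M_(m * dA * dB)) =
    \sum_a \sum_b tensmx (tensmx (w%:M : 'M_m) (Aop x1 a)) (Bop x2 b).
  under eq_bigr do rewrite -tensmx_sumr (Bpovm x2).2.
  by rewrite -tensmx_suml -tensmx_sumr (Apovm x1).2 !tensmx_scalar !mulr1.
rewrite /pair_sum -sumrB; apply: psd_sum => a; rewrite -sumrB; apply: psd_sum => b.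
rewrite -!tensmxBl; apply: psd_tens; last exact: (Bpovm x2).1.
by apply: psd_tens; [exact: le_w | exact: (Apovm x1).1].
Qed.

Lemma game_value_le_pair (w : C) (rho : 'M[C]_(m * dA * dB)) :
  density rho -> (forall a b, psd (w%:M - pair_op a b)) ->
  game_value pi R rho Aop Bop <= w.
Proof.
move=> [psd_rho tr_rho] le_w; rewrite game_valueE -subr_ge0.
have psdW : psd (w%:M - game_op).
  rewrite -(subrK pair_sum w%:M) -addrA addrC.
  exact/psdD/psd_scalar_sub_pair_sum/le_w/psd_pair_sum_sub_game_op.
have := mxtrace_psd_ge0 psdW psd_rho.
by rewrite mulmxBl linearB /= mul_scalar_mx linearZ /= tr_rho mulr1.
Qed.

End Strategy.

Lemma pair_op_value_unentangled a b (v : 'rV[C]_m) :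
  (v *m adjmx v) 0 0 = 1 ->
  unentangled_values pi R ((v *m pair_op a b *m adjmx v) 0 0).
Proof.
move=> v_unit; pose f x := if x == x1 then a else b.
have x21 : (x2 == x1) = false by rewrite eq_sym (negbTE x12).
have -> : (v *m pair_op a b *m adjmx v) 0 0
          = \sum_x pi x * (v *m R (f x) x *m adjmx v) 0 0.
  rewrite (sum_card2 _ x12 cardX) /f eqxx x21 /pair_op.
  by rewrite mulmxDr mulmxDl -!scalemxAr -!scalemxAl !mxE.
exact: deterministic_unentangled_value.
Qed.

End Game.

Theorem mainTheorem3 (C : numClosedFieldType) (X A : finType) (m : nat)
  (pi : X -> C) (R : A -> X -> 'M[C]_m) :
  moe_game pi R -> #|X| = 2%N ->
  exists w : C, is_unentangled_value pi R w /\ is_quantum_value pi R w.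
Proof.
move=> [_ /card_gt0P [a0 _] m_gt0 [pi_ge0 _] R_povm] cardX.
have /card_gt1P [x1 [x2 [_ _ x12]]] : (1 < #|X|)%N by rewrite cardX.
have herm a b := pair_op_herm pi_ge0 R_povm x1 x2 a b.
pose g (t : A * A * 'I_m) := spectral_diag (pair_op pi R x1 x2 t.1.1 t.1.2) 0 t.2.
have g_real t : g t \is Num.real.
  by have [_ _ _] := hermitian_spectral (herm t.1.1 t.1.2); apply.
have [[[a b] i] g_max] := real_argmax ((a0, a0), Ordinal m_gt0) g_real.
have le_w v : quantum_values pi R v -> v <= g (a, b, i).
  move=> [dA [dB [rho [Aop [Bop [rho_dens Apovm Bpovm ->]]]]]].
  apply: (game_value_le_pair pi_ge0 R_povm x12 cardX) => // a' b'.
  by apply: psd_scalar_sub => // k; exact: g_max (a', b', k).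
have w_unentangled : unentangled_values pi R (g (a, b, i)).
  rewrite /g /=; have [v_unit <-] := spectral_row_quad i (herm a b).
  exact: pair_op_value_unentangled.
exists (g (a, b, i)); split; apply: is_sup_max => //.
- by move=> v /unentangled_quantum_values; exact: le_w.
- exact: unentangled_quantum_values.
Qed.
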